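(* Let $A\in P(n)$ have rank one. Then for every unitarily invariant norm $N$ on $M_n$, $$I(N,A)=\min_{1\le i\le n}A_{ii}.$$
   Context: $M_n$ is the set of complex $n\times n$ matrices, $P(n)$ the positive semidefinite ones, $\circ$ the Hadamard product. $I(N,A)=\min\{N(A\circ B): B\in P(n),\ N(B)=1\}$. *)

From HB Require Import structures.
From mathcomp Require Import all_boot all_order all_algebra.
From mathcomp Require Import complex.
From mathcomp Require Import reals.
Set Implicit Arguments. Unset Strict Implicit. Unset Printing Implicit Defensive.
Import Order.TTheory GRing.Theory Num.Theory.
Local Open Scope ring_scope.

Definition adjmx {C : numClosedFieldType} {m n} (A : 'M[C]_(m, n)) : 'M[C]_(n, m) :=
  (map_mx Num.conj A)^T.

Definition unitary {C : numClosedFieldType} {n} (U : 'M[C]_n) : Prop :=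
  U *m adjmx U = 1%:M.

(* positive semidefinite: Hermitian with nonnegative quadratic form
   (in a numClosedFieldType, 0 <= z means z is real and nonnegative) *)
Definition psd {C : numClosedFieldType} {n} (A : 'M[C]_n) : Prop :=
  adjmx A = A /\ forall x : 'cV[C]_n, 0 <= (adjmx x *m A *m x) 0 0.

Definition hadamard {C : numClosedFieldType} {m n} (A B : 'M[C]_(m, n)) : 'M[C]_(m, n) :=
  \matrix_(i, j) (A i j * B i j).

Definition is_matrix_norm {R : realType} {n} (N : 'M[R[i]]_n -> R) : Prop :=
  (forall A, 0 <= N A) /\
  (forall A, N A = 0 -> A = 0) /\
  (forall (c : R[i]) A, ((N (c *: A))%:C)%C = `|c| * ((N A)%:C)%C) /\
  (forall A B, N (A + B) <= N A + N B).

Definition unitarily_invariant_norm {R : realType} {n} (N : 'M[R[i]]_n -> R) : Prop :=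
  is_matrix_norm N /\
  forall U V A : 'M[R[i]]_n, unitary U -> unitary V -> N (U *m A *m V) = N A.

(* v = I(N,A) = min { N(A o B) : B in P(n), N(B) = 1 }, the minimum being attained *)
Definition is_I {R : realType} {n} (N : 'M[R[i]]_n -> R) (A : 'M[R[i]]_n) (v : R) : Prop :=
  (exists B, psd B /\ N B = 1 /\ N (hadamard A B) = v) /\
  (forall B, psd B -> N B = 1 -> v <= N (hadamard A B)).

From HB Require Import structures.
From mathcomp Require Import all_boot all_order all_algebra.
From mathcomp Require Import complex.
From mathcomp Require Import reals ring lra.
Set Implicit Arguments. Unset Strict Implicit. Unset Printing Implicit Defensive.
Import Order.TTheory GRing.Theory Num.Theory.
Local Open Scope ring_scope.

(* Write A = u v^T.  Since A is Hermitian, |u_i| |v_j| = |u_j| |v_i|, so at an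
   index i0 where the diagonal u_i v_i is minimal both |u_i0| and |v_i0| are
   minimal.  Hence D1 (A o B) D2 = A_{i0 i0} B for the diagonal matrices
   D1 = diag(u_i0 / u_i), D2 = diag(v_i0 / v_j), whose entries have modulus at
   most 1.  Every such diagonal matrix is the mean of two diagonal unitaries,
   so multiplying by it cannot increase a unitarily invariant norm; this gives
   N(A o B) >= A_{i0 i0} N(B).  Equality is attained at B = E_{i0 i0} / N(E_{i0 i0}). *)

Section UnimodularHalfSum.
Variable C : numClosedFieldType.
Implicit Types d e : C.

Definition phase d : C := if d == 0 then 1 else d / `|d|.

Lemma phase_unimodular d : phase d * (phase d)^* = 1.
Proof.
rewrite -normCK /phase; case: eqP => [_|/eqP d0]; first by rewrite normr1 expr1n.
by rewrite normf_div normr_id divff ?expr1n // normr_eq0.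
Qed.

Lemma phase_mul_normr d : phase d * `|d| = d.
Proof.
rewrite /phase; case: eqP => [->|/eqP d0]; first by rewrite normr0 mulr0.
by rewrite divfK // normr_eq0.
Qed.

Lemma phase_shift_unimodular d e : e^* = - e -> `|d| ^+ 2 - e ^+ 2 = 1 ->
  (phase d * (`|d| + e)) * (phase d * (`|d| + e))^* = 1.
Proof.
move=> eJ de1; rewrite rmorphM /= mulrACA phase_unimodular mul1r.
by rewrite rmorphD /= conj_normC eJ -de1; ring.
Qed.

(* d = (w1 + w2) / 2 with w1, w2 = phase d * (|d| +- i sqrt(1 - |d|^2)). *)
Lemma unimodular_half_sum d : `|d| <= 1 ->
  exists w : C * C, [/\ w.1 * w.1^* = 1, w.2 * w.2^* = 1 & w.1 + w.2 = d *+ 2].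
Proof.
move=> d_le1; set s := sqrtC (1 - `|d| ^+ 2).
have sJ : s^* = s by apply: geC0_conj; rewrite sqrtC_ge0 subr_ge0 exprn_ile1.
have s2 : s ^+ 2 = 1 - `|d| ^+ 2 by rewrite sqrtCK.
have isJ : ('i * s)^* = - ('i * s) by rewrite rmorphM /= conjCi sJ mulNr.
have is2 : `|d| ^+ 2 - ('i * s) ^+ 2 = 1 by rewrite exprMn sqrCi s2; ring.
exists (phase d * (`|d| + 'i * s), phase d * (`|d| + - ('i * s))); split.
- exact: phase_shift_unimodular.
- by apply: phase_shift_unimodular; rewrite ?sqrrN // rmorphN /= isJ.
- by rewrite /= -mulrDr addrACA subrr addr0 mulr2n mulrDr phase_mul_normr.
Qed.

End UnimodularHalfSum.

Section DiagonalUnitaries.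
Variables (C : numClosedFieldType) (n : nat).

Lemma unitary1 : unitary (1%:M : 'M[C]_n).
Proof. by rewrite /unitary /adjmx mul1mx map_mx1 trmx1. Qed.

Lemma unitary_diag (w : 'rV[C]_n) :
  (forall i, w 0 i * (w 0 i)^* = 1) -> unitary (diag_mx w).
Proof.
move=> w_unimod; rewrite /unitary /adjmx; apply/matrixP => i j.
rewrite mul_diag_mx !mxE eq_sym.
by case: eqVneq => [->|_]; rewrite ?mulr1n ?w_unimod // mulr0n rmorph0 mulr0.
Qed.

Lemma diag_contraction_half_sum (d : 'rV[C]_n) : (forall i, `|d 0 i| <= 1) ->
  exists2 D : 'M[C]_n * 'M[C]_n, unitary D.1 /\ unitary D.2 &
    diag_mx d *+ 2 = D.1 + D.2.
Proof.
move=> d_le1.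
have [w w_spec] := fin_all_exists (fun i => @unimodular_half_sum C _ (d_le1 i)).
exists (diag_mx (\row_i (w i).1), diag_mx (\row_i (w i).2)).
  by split; apply: unitary_diag => i; rewrite mxE; case: (w_spec i).
apply/matrixP => i j; rewrite !mxE -!mulrnDl.
by case: (w_spec i) => _ _ ->; rewrite mulr2n.
Qed.

End DiagonalUnitaries.

Section PsdDelta.
Variables (C : numClosedFieldType) (n : nat).
Implicit Types A B : 'M[C]_n.

Lemma adjmx_delta m p (i : 'I_m) (j : 'I_p) :
  adjmx (delta_mx i j : 'M[C]_(m, p)) = delta_mx j i.
Proof.
by apply/matrixP => k l; rewrite !mxE andbC; case: (_ && _); rewrite ?rmorph1 ?rmorph0.
Qed.

Lemma psd_diag_ge0 A j : psd A -> 0 <= A j j.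
Proof.
case=> _ /(_ (delta_mx j 0)); rewrite adjmx_delta -mulmxA -colE -rowE.
by rewrite !mxE.
Qed.

Lemma psd_delta i : psd (delta_mx i i : 'M[C]_n).
Proof.
split=> [|x]; first exact: adjmx_delta.
rewrite -(mul_delta_mx (0 : 'I_1)) mulmxA -mulmxA -colE -rowE !mxE big_ord1 !mxE.
by rewrite mulrC -normCK exprn_ge0.
Qed.

Lemma psdZ (c : C) B : 0 <= c -> psd B -> psd (c *: B).
Proof.
move=> c_ge0 [B_herm B_quad]; split=> [|x].
  apply/matrixP => i j; move/matrixP/(_ i j): B_herm.
  by rewrite !mxE rmorphM /= (geC0_conj c_ge0) => ->.
by rewrite -scalemxAr -scalemxAl mxE mulr_ge0.
Qed.

Lemma hadamard_delta A (c : C) i :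
  hadamard A (c *: delta_mx i i) = A i i *: (c *: delta_mx i i).
Proof.
apply/matrixP => k l; rewrite !mxE.
by case: eqVneq => [->|]; case: eqVneq => [->|] //= _; rewrite !mulr0.
Qed.

End PsdDelta.

Section UnitarilyInvariantNorm.
Variables (R : realType) (n : nat) (N : 'M[R[i]]_n -> R).
Hypothesis N_ui : unitarily_invariant_norm N.

Lemma normZ_ge0 (c : R) X : 0 <= c -> N ((c%:C)%C *: X) = c * N X.
Proof.
move=> c_ge0; have [[_ [_ [N_scale _]]] _] := N_ui.
by apply: complexI; rewrite N_scale ger0_norm ?lecR // rmorphM.
Qed.

Lemma normMn X k : N (X *+ k) = N X *+ k.
Proof.
by rewrite -scaler_nat -[k%:R](rmorph_nat (real_complex R)) normZ_ge0
  ?ler0n // mulr_natl.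
Qed.

Lemma norm_unitary_mull U X : unitary U -> N (U *m X) = N X.
Proof.
by move=> uU; rewrite -[U *m X]mulmx1; case: N_ui => _ -> //; apply: unitary1.
Qed.

Lemma norm_unitary_mulr U X : unitary U -> N (X *m U) = N X.
Proof.
by move=> uU; rewrite -[X *m U]mul1mx mulmxA; case: N_ui => _ -> //; apply: unitary1.
Qed.

Lemma norm_diag_mull_le (d : 'rV[R[i]]_n) X : (forall i, `|d 0 i| <= 1) ->
  N (diag_mx d *m X) <= N X.
Proof.
case/diag_contraction_half_sum => -[D1 D2] /= [uD1 uD2] dD.
have [[_ [_ [_ N_tri]]] _] := N_ui.
have := N_tri (D1 *m X) (D2 *m X).
rewrite -mulmxDl -dD mulmxDl -mulr2n normMn.
by rewrite (norm_unitary_mull X uD1) (norm_unitary_mull X uD2) mulr2n; lra.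
Qed.

Lemma norm_diag_mulr_le (d : 'rV[R[i]]_n) X : (forall i, `|d 0 i| <= 1) ->
  N (X *m diag_mx d) <= N X.
Proof.
case/diag_contraction_half_sum => -[D1 D2] /= [uD1 uD2] dD.
have [[_ [_ [_ N_tri]]] _] := N_ui.
have := N_tri (X *m D1) (X *m D2).
rewrite -mulmxDr -dD mulmxDr -mulr2n normMn.
by rewrite (norm_unitary_mulr X uD1) (norm_unitary_mulr X uD2) mulr2n; lra.
Qed.

Lemma normalized_psd_delta i :
  exists2 B, psd B /\ N B = 1 & forall A, hadamard A B = A i i *: B.
Proof.
have [[N_ge0 [N_eq0 _]] _] := N_ui.
set E : 'M[R[i]]_n := delta_mx i i.
have NE_gt0 : 0 < N E.
  rewrite lt_def N_ge0 andbT; apply/eqP => /N_eq0 /matrixP /(_ i i).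
  by rewrite !mxE !eqxx => /eqP; rewrite oner_eq0.
have NEV_ge0 : 0 <= (N E)^-1 by rewrite invr_ge0 ltW.
exists (((N E)^-1)%:C%C *: E); last by move=> A; rewrite hadamard_delta.
split; first by apply: psdZ; rewrite ?lecR //; apply: psd_delta.
by rewrite normZ_ge0 // mulVf // gt_eqF.
Qed.

End UnitarilyInvariantNorm.

Lemma rank1_factor (F : fieldType) n (A : 'M[F]_n) : \rank A = 1%N ->
  exists u v : 'I_n -> F, forall i j, A i j = u i * v j.
Proof.
move=> rkA; have := mulmx_base A; move: (col_base A) (row_base A); rewrite rkA.
move=> U V UV; exists (fun i => U i 0), (fun j => V 0 j) => i j.
by rewrite -UV mxE big_ord1.
Qed.

Lemma le_of_cross_mul (D : numDomainType) (p q p0 q0 : D) :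
  0 < p -> 0 < q -> 0 < p0 -> 0 < q0 ->
  p * q0 = p0 * q -> p0 * q0 <= p * q -> p0 <= p.
Proof.
move=> p_gt0 q_gt0 p0_gt0 q0_gt0 cross le_pq.
rewrite real_leNgt ?gtr0_real //; apply/negP => p_lt_p0.
have q0_lt_q : q0 < q by rewrite -(ltr_pM2l p_gt0) (lt_le_trans _ le_pq) // ltr_pM2r.
move: (ltr_pM2l p0_gt0 q0 q); rewrite q0_lt_q -cross ltr_pM2r //.
by move=> /(lt_trans p_lt_p0); rewrite ltxx.
Qed.

Section RankOneHermitian.
Variables (C : numClosedFieldType) (n : nat) (A : 'M[C]_n) (u v : 'I_n -> C).
Variable i0 : 'I_n.
Hypotheses (A_herm : adjmx A = A) (A_uv : forall i j, A i j = u i * v j).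
Hypotheses (A_i0_gt0 : 0 < A i0 i0) (A_i0_min : forall j, A i0 i0 <= A j j).

Lemma rank1_factor_neq0 j : (u j != 0) && (v j != 0).
Proof.
have := lt_le_trans A_i0_gt0 (A_i0_min j).
by rewrite A_uv lt_def mulf_eq0 negb_or => /andP[].
Qed.

Lemma normr_factor_gt0 j : 0 < `|u j| /\ 0 < `|v j|.
Proof. by rewrite !normr_gt0; apply/andP; apply: rank1_factor_neq0. Qed.

Lemma normr_factor_cross i : `|u i| * `|v i0| = `|u i0| * `|v i|.
Proof.
rewrite -!normrM -!A_uv; move/matrixP/(_ i i0): A_herm.
by rewrite !mxE => <-; rewrite norm_conjC.
Qed.

Lemma normr_factor_diag i : `|u i0| * `|v i0| <= `|u i| * `|v i|.
Proof.
have Aii_ge0 : 0 <= A i i := le_trans (ltW A_i0_gt0) (A_i0_min i).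
by rewrite -!normrM -!A_uv !ger0_norm ?A_i0_min ?Aii_ge0 ?ltW.
Qed.

Lemma normr_factor_l_min i : `|u i0| <= `|u i|.
Proof.
have [[ui vi] [ui0 vi0]] := (normr_factor_gt0 i, normr_factor_gt0 i0).
exact: le_of_cross_mul ui vi ui0 vi0 (normr_factor_cross i) (normr_factor_diag i).
Qed.

Lemma normr_factor_r_min i : `|v i0| <= `|v i|.
Proof.
have [[ui vi] [ui0 vi0]] := (normr_factor_gt0 i, normr_factor_gt0 i0).
apply: le_of_cross_mul vi ui vi0 ui0 _ _.
  by rewrite mulrC -normr_factor_cross mulrC.
by rewrite [_ * `|u i0|]mulrC [_ * `|u i|]mulrC normr_factor_diag.
Qed.

Lemma normr_rescale_le1 i : `|u i0 / u i| <= 1 /\ `|v i0 / v i| <= 1.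
Proof.
have [ui_gt0 vi_gt0] := normr_factor_gt0 i.
by rewrite !normf_div !ler_pdivrMr // !mul1r normr_factor_l_min normr_factor_r_min.
Qed.

Lemma diag_rescale_hadamard B :
  diag_mx (\row_i (u i0 / u i)) *m hadamard A B *m diag_mx (\row_j (v i0 / v j))
  = A i0 i0 *: B.
Proof.
apply/matrixP => i j; rewrite mul_mx_diag mxE mul_diag_mx !mxE !A_uv.
have /andP[ui_neq0 _] := rank1_factor_neq0 i.
have /andP[_ vj_neq0] := rank1_factor_neq0 j.
by field; rewrite ui_neq0 vj_neq0.
Qed.

End RankOneHermitian.

Theorem proposition5p2 (R : realType) (n : nat) (A : 'M[R[i]]_n)
  (N : 'M[R[i]]_n -> R) :
  psd A -> \rank A = 1%N -> unitarily_invariant_norm N ->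
  forall i0 : 'I_n, (forall j : 'I_n, A i0 i0 <= A j j) ->
  exists m : R, (m%:C)%C = A i0 i0 /\ is_I N A m.
Proof.
move=> A_psd rkA N_ui i0 A_i0_min.
have [m Am m_ge0] : exists2 m : R, (m%:C)%C = A i0 i0 & 0 <= m.
  have A_i0_real : A i0 i0 \is Num.real by rewrite ger0_real ?psd_diag_ge0.
  by exists (complex.Re (A i0 i0)); rewrite -?lecR RRe_real ?psd_diag_ge0.
have N_A_i0Z B : N B = 1 -> N (A i0 i0 *: B) = m.
  by move=> NB1; rewrite -Am normZ_ge0 // NB1 mulr1.
exists m; split => //; split.
  have [B [B_psd NB1] AB] := normalized_psd_delta N_ui i0.
  by exists B; rewrite AB N_A_i0Z.
move=> B _ NB1; have [m0|m_neq0] := eqVneq m 0.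
  by rewrite m0; case: N_ui => -[N_ge0 _] _.
have A_i0_gt0 : 0 < A i0 i0 by rewrite -Am ltcR lt_def m_neq0.
have [u [v A_uv]] := rank1_factor rkA.
have A_herm : adjmx A = A by case: A_psd.
have rescale_le1 := normr_rescale_le1 A_herm A_uv A_i0_gt0 A_i0_min.
rewrite -(N_A_i0Z B NB1) -(diag_rescale_hadamard A_uv A_i0_gt0 A_i0_min).
apply: le_trans (norm_diag_mulr_le N_ui _ _) _ => [i|].
  by rewrite mxE; case: (rescale_le1 i).
by apply: norm_diag_mull_le => // i; rewrite mxE; case: (rescale_le1 i).
Qed.
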